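(* Let $p,\mu>1$, $\varepsilon>0$, and let $\rho:[0,\infty)\to[2-\mu,p]$ be continuous and decreasing with $\rho(0)=p$ and $\lim_{r\to\infty}\rho(r)=2-\mu$. Define $$G(\xi):=\int_0^{|\xi|}\int_0^s(\varepsilon+r)^{\rho(r)-2}\,\mathrm{d}r\,\mathrm{d}s,\quad\xi\in\mathbb{R}^2.$$ Then there are constants $c_5,c_6>0$ with $$c_5(1+|\xi|)^{-\mu}|\eta|^2\le D^2G(\xi)(\eta,\eta)\le c_6(1+|\xi|)^{p-2}|\eta|^2\quad\text{for all }\xi,\eta\in\mathbb{R}^2,$$ and there is a constant $c_{49}$ with $|D^2G(\xi)|\,|\xi|^2\le c_{49}(G(\xi)+1)$ for all $\xi\in\mathbb{R}^2$. *)

From Stdlib Require Import Reals.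
From Coquelicot Require Import Coquelicot.
Open Scope R_scope.

Definition Gfun (eps : R) (rho : R -> R) (x y : R) : R :=
  RInt (fun s => RInt (fun r => Rpower (eps + r) (rho r - 2)) 0 s) 0 (sqrt (x ^ 2 + y ^ 2)).

Definition d1 (f : R -> R -> R) (x y : R) : R := Derive (fun t => f t y) x.
Definition d2 (f : R -> R -> R) (x y : R) : R := Derive (fun t => f x t) y.

Definition H11 f := d1 (d1 f).
Definition H12 f := d2 (d1 f).
Definition H21 f := d1 (d2 f).
Definition H22 f := d2 (d2 f).

Definition D2form (f : R -> R -> R) (x y a b : R) : R :=
  H11 f x y * a * a + H12 f x y * a * b + H21 f x y * b * a + H22 f x y * b * b.

(* |D^2 f (x,y)| : Frobenius (Hilbert-Schmidt) norm of the Hessian *)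
Definition D2norm (f : R -> R -> R) (x y : R) : R :=
  sqrt (H11 f x y ^ 2 + H12 f x y ^ 2 + H21 f x y ^ 2 + H22 f x y ^ 2).

Definition norm2 (x y : R) : R := sqrt (x ^ 2 + y ^ 2).

(* G(xi) = g(|xi|) with g'' = f, where f(r) = (eps + r)^(rho r - 2). The Hessian of such a
   radial function is (g'(r)/r) I + (f(r) - g'(r)/r) xi xi^T / r^2, whose eigenvalues are the
   mean g'(r)/r of f over [0, r] and f(r) itself. As rho r - 2 stays in [-mu, p - 2] and
   (eps + r)/(1 + r) is bounded above and below, f(r) lies between constant multiples of
   (1 + r)^(-mu) and (1 + r)^(p - 2), and hence so does its mean: this is the two-sided bound.
   For the second estimate, rho - 2 < -1 near infinity, so f is integrable: g' is bounded and
   r^2 f(r) = O(1 + r), whence |D^2 G(xi)| |xi|^2 = O(1 + |xi|), while g grows at least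
   linearly. *)

From Stdlib Require Import Reals Lra.
From Coquelicot Require Import Coquelicot.
(* Imported after Coquelicot, whose [d1] would otherwise shadow the one of Defs. *)
From Pilot Require Import Defs.
Open Scope R_scope.

Lemma is_derive_value (f : R -> R) (x l l' : R) : is_derive f x l -> l = l' -> is_derive f x l'.
Proof. intros H <-; exact H. Qed.

Lemma exp_le_exp x y : x <= y -> exp x <= exp y.
Proof. intros [H | ->]; [left; apply exp_increasing; exact H | lra]. Qed.

Lemma Rpower_gt_0 x e : 0 < Rpower x e.
Proof. apply exp_pos. Qed.

Lemma Rpower_1p_le_1 x e : 0 <= x -> e <= 0 -> Rpower (1 + x) e <= 1.
Proof. intros Hx He. rewrite <- (Rpower_O (1 + x)) at 2 by lra. apply Rle_Rpower; lra. Qed.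

Lemma ln_shift_bound eps r : 0 < eps -> 0 <= r ->
  Rabs (ln (eps + r) - ln (1 + r)) <= Rabs (ln eps).
Proof.
  intros Heps Hr.
  destruct (Rle_lt_dec eps 1) as [Hle | Hlt].
  - assert (ln eps + ln (1 + r) <= ln (eps + r)).
    { rewrite <- ln_mult by lra. apply ln_le; nra. }
    assert (ln (eps + r) <= ln (1 + r)) by (apply ln_le; lra).
    assert (ln eps <= 0) by (rewrite <- ln_1; apply ln_le; lra).
    rewrite !Rabs_left1 by lra. lra.
  - assert (ln (eps + r) <= ln eps + ln (1 + r)).
    { rewrite <- ln_mult by lra. apply ln_le; nra. }
    assert (ln (1 + r) <= ln (eps + r)) by (apply ln_le; lra).
    assert (0 <= ln eps) by (rewrite <- ln_1; apply ln_le; lra).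
    rewrite !Rabs_pos_eq by lra. lra.
Qed.

Lemma Rpower_shift_bounds eps r e lo hi K : 0 < eps -> 0 <= r ->
  lo <= e <= hi -> Rabs e <= K ->
  / exp (K * Rabs (ln eps)) * Rpower (1 + r) lo <= Rpower (eps + r) e
    <= exp (K * Rabs (ln eps)) * Rpower (1 + r) hi.
Proof.
  intros Heps Hr He HK. unfold Rpower. rewrite <- exp_Ropp, <- !exp_plus.
  assert (Hshift : Rabs (e * (ln (eps + r) - ln (1 + r))) <= K * Rabs (ln eps)).
  { rewrite Rabs_mult.
    apply Rmult_le_compat; auto using Rabs_pos, ln_shift_bound. }
  apply Rabs_le_between in Hshift.
  assert (0 <= ln (1 + r)) by (rewrite <- ln_1; apply ln_le; lra).
  assert (lo * ln (1 + r) <= e * ln (1 + r) <= hi * ln (1 + r)) by (split; nra).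
  split; apply exp_le_exp; lra.
Qed.

Lemma is_derive_Rpower_1p b x : -1 < x ->
  is_derive (fun t => Rpower (1 + t) b) x (b * Rpower (1 + x) (b - 1)).
Proof.
  intros Hx.
  apply (is_derive_value _ _ (scal 1 (b * Rpower (1 + x) (b - 1)))).
  - apply (is_derive_comp (fun y => Rpower y b) (fun t => 1 + t)).
    + apply is_derive_Reals, derivable_pt_lim_power. lra.
    + auto_derive; [exact I | ring].
  - unfold scal; simpl; unfold mult; simpl. ring.
Qed.

Lemma is_RInt_Rpower_1p b u v : -1 < u -> u <= v -> b + 1 <> 0 ->
  is_RInt (fun x => Rpower (1 + x) b) u v
    ((Rpower (1 + v) (b + 1) - Rpower (1 + u) (b + 1)) / (b + 1)).
Proof.
  intros Hu Huv Hb.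
  replace ((Rpower (1 + v) (b + 1) - Rpower (1 + u) (b + 1)) / (b + 1)) with
    (minus (/ (b + 1) * Rpower (1 + v) (b + 1)) (/ (b + 1) * Rpower (1 + u) (b + 1)))
    by (unfold minus, plus, opp; simpl; field; exact Hb).
  apply (is_RInt_derive (fun x => / (b + 1) * Rpower (1 + x) (b + 1))).
  - intros x Hx. rewrite Rmin_left, Rmax_right in Hx by exact Huv.
    apply (is_derive_value _ _ (/ (b + 1) * ((b + 1) * Rpower (1 + x) (b + 1 - 1)))).
    + apply (is_derive_scal (fun t => Rpower (1 + t) (b + 1))), is_derive_Rpower_1p. lra.
    + replace (b + 1 - 1) with b by ring. simpl. field. exact Hb.
  - intros x Hx. rewrite Rmin_left, Rmax_right in Hx by exact Huv.
    apply (@ex_derive_continuous R_AbsRing R_NormedModule).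
    eexists. apply is_derive_Rpower_1p. lra.
Qed.

Lemma ex_RInt_Rpower_1p b u v : -1 < u -> u <= v -> ex_RInt (fun x => Rpower (1 + x) b) u v.
Proof.
  intros Hu Huv. apply (@ex_RInt_continuous R_CompleteNormedModule).
  intros x Hx. rewrite Rmin_left in Hx by exact Huv.
  apply (@ex_derive_continuous R_AbsRing R_NormedModule).
  eexists. apply is_derive_Rpower_1p. lra.
Qed.

Lemma RInt_Rpower_1p_le b s : -1 < b -> 0 <= s ->
  RInt (fun x => Rpower (1 + x) b) 0 s <= (1 + / (b + 1)) * (s * Rpower (1 + s) b).
Proof.
  intros Hb Hs.
  assert (Hinv : 0 < / (b + 1)) by (apply Rinv_0_lt_compat; lra).
  assert (Hw := Rpower_gt_0 (1 + s) b).
  destruct (Rle_lt_dec 0 b) as [Hb0 | Hb0].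
  - assert (RInt (fun x => Rpower (1 + x) b) 0 s <= s * Rpower (1 + s) b).
    { rewrite <- (Rminus_0_r s) at 2.
      rewrite <- (RInt_const (V := R_CompleteNormedModule)).
      apply RInt_le; [exact Hs | apply ex_RInt_Rpower_1p; lra
                    | apply (ex_RInt_const (V := R_NormedModule)) |].
      intros x Hx. apply Rle_Rpower_l; lra. }
    assert (0 <= / (b + 1) * (s * Rpower (1 + s) b)) by (apply Rmult_le_pos; nra).
    lra.
  - rewrite (is_RInt_unique _ _ _ _ (is_RInt_Rpower_1p b 0 s ltac:(lra) Hs ltac:(lra))).
    rewrite Rpower_plus, Rpower_1 by lra.
    replace (1 + 0) with 1 by ring.
    unfold Rpower at 2. rewrite ln_1, Rmult_0_r, exp_0.
    assert (Rpower (1 + s) b <= 1) by (apply Rpower_1p_le_1; lra).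
    unfold Rdiv. rewrite Rmult_plus_distr_r, Rmult_1_l.
    assert ((Rpower (1 + s) b * (1 + s) * 1 - 1) * / (b + 1)
            <= / (b + 1) * (s * Rpower (1 + s) b)).
    { rewrite Rmult_comm. apply Rmult_le_compat_l; nra. }
    assert (0 <= s * Rpower (1 + s) b) by nra.
    lra.
Qed.

Lemma RInt_Rpower_1p_tail a u v : 1 < a -> 0 <= u -> u <= v ->
  RInt (fun x => Rpower (1 + x) (- a)) u v <= / (a - 1).
Proof.
  intros Ha Hu Huv.
  rewrite (is_RInt_unique _ _ _ _ (is_RInt_Rpower_1p (- a) u v ltac:(lra) Huv ltac:(lra))).
  assert (Rpower (1 + u) (- a + 1) <= 1) by (apply Rpower_1p_le_1; lra).
  assert (Hv := Rpower_gt_0 (1 + v) (- a + 1)).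
  replace ((Rpower (1 + v) (- a + 1) - Rpower (1 + u) (- a + 1)) / (- a + 1))
    with ((Rpower (1 + u) (- a + 1) - Rpower (1 + v) (- a + 1)) * / (a - 1)) by (field; lra).
  rewrite <- (Rmult_1_l (/ (a - 1))) at 2.
  apply Rmult_le_compat_r; [left; apply Rinv_0_lt_compat |]; lra.
Qed.

Lemma is_lim_p_infty_eventually_le (f : R -> R) (l m : R) :
  is_lim f p_infty l -> l < m -> exists M, 0 <= M /\ forall x, M <= x -> f x <= m.
Proof.
  intros Hlim Hlm. apply is_lim_spec in Hlim. simpl in Hlim.
  assert (Hd : 0 < m - l) by lra.
  destruct (Hlim (mkposreal _ Hd)) as [M HM]; simpl in HM.
  exists (Rmax 0 (M + 1)). split; [apply Rmax_l |].
  intros x Hx. assert (M + 1 <= x) by (eapply Rle_trans; [apply Rmax_r | exact Hx]).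
  specialize (HM x ltac:(lra)). apply Rabs_lt_between in HM. lra.
Qed.

Section Primitive.

Variable f : R -> R.
Hypothesis f_cont : forall x, continuous f x.

Lemma ex_RInt_of_cont a b : ex_RInt f a b.
Proof. apply (@ex_RInt_continuous R_CompleteNormedModule). intros; apply f_cont. Qed.

Lemma is_derive_RInt_0 s : is_derive (fun t => RInt f 0 t) s (f s).
Proof.
  apply is_derive_RInt with (a := 0); [| apply f_cont].
  apply filter_forall. intros t. apply RInt_correct, ex_RInt_of_cont.
Qed.

Lemma continuous_RInt_0_of_cont s : continuous (fun t => RInt f 0 t) s.
Proof.
  apply (@ex_derive_continuous R_AbsRing R_NormedModule).
  eexists. apply is_derive_RInt_0.
Qed.

Lemma RInt_0_opp s : RInt f 0 (- s) = RInt (fun x => - f (- x)) 0 s.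
Proof.
  rewrite <- (Rmult_0_r (-1)), <- (Rplus_0_r (-1 * 0)) at 1.
  replace (- s) with (-1 * s + 0) by ring.
  rewrite <- RInt_comp_lin by apply ex_RInt_of_cont.
  apply RInt_ext. intros x _. unfold scal; simpl; unfold mult; simpl.
  replace (-1 * x + 0) with (- x) by ring. ring.
Qed.

Lemma RInt_0_opp_even s : (forall x, f (- x) = f x) -> RInt f 0 (- s) = - RInt f 0 s.
Proof.
  intros Heven. rewrite RInt_0_opp.
  rewrite (RInt_ext _ (fun x => opp (f x))) by (intros x _; rewrite Heven; reflexivity).
  exact (RInt_opp f 0 s (ex_RInt_of_cont 0 s)).
Qed.

Lemma RInt_0_opp_odd s : (forall x, f (- x) = - f x) -> RInt f 0 (- s) = RInt f 0 s.
Proof.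
  intros Hodd. rewrite RInt_0_opp.
  apply RInt_ext. intros x _. rewrite Hodd. simpl. ring.
Qed.

End Primitive.

Lemma sum_sq_le_0 x y : x ^ 2 + y ^ 2 <= 0 -> x = 0 /\ y = 0.
Proof. intros H. split; nra. Qed.

Lemma locally_gt (q : R) : 0 < q -> locally q (fun t => 0 < t).
Proof.
  intros Hq. exists (mkposreal q Hq). intros t Ht.
  apply Rabs_lt_between in Ht. unfold minus, plus, opp in Ht; simpl in Ht. lra.
Qed.

Section RadialHessian.

Variables (G : R -> R -> R) (g F f : R -> R).
Hypothesis G_radial : forall x y, G x y = g (norm2 x y).
Hypothesis g_deriv : forall t, is_derive g t (F t).
Hypothesis F_deriv : forall t, is_derive F t (f t).
Hypothesis g_even : forall t, g (- t) = g t.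
Hypothesis F_odd : forall t, F (- t) = - F t.

(* With u = x^2 + y^2 we get grad G = rslope u (x, y) and
   D^2 G = rslope u I + rcurv u (x, y)^T (x, y). *)
Definition rslope (u : R) : R := if Rlt_dec 0 u then F (sqrt u) / sqrt u else f 0.
Definition rcurv (u : R) : R := (f (sqrt u) - rslope u) / u.

Lemma rslope_pos u : 0 < u -> rslope u = F (sqrt u) / sqrt u.
Proof. intros Hu. unfold rslope. destruct (Rlt_dec 0 u); [reflexivity | lra]. Qed.

Lemma rslope_0 : rslope 0 = f 0.
Proof. unfold rslope. destruct (Rlt_dec 0 0); [lra | reflexivity]. Qed.

Lemma F_0 : F 0 = 0.
Proof. assert (H := F_odd 0). rewrite Ropp_0 in H. lra. Qed.

Lemma sqrt_sq_abs t : sqrt (t ^ 2 + 0 ^ 2) = Rabs t.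
Proof. rewrite <- sqrt_Rsqr_abs. f_equal. unfold Rsqr. ring. Qed.

Lemma G_sym x y : G x y = G y x.
Proof. rewrite !G_radial. unfold norm2. f_equal. f_equal. ring. Qed.

Lemma G_axis t : G t 0 = g t.
Proof.
  rewrite G_radial. unfold norm2. rewrite sqrt_sq_abs.
  destruct (Rle_lt_dec 0 t); [rewrite Rabs_pos_eq | rewrite Rabs_left, g_even]; auto.
Qed.

Lemma mul_rslope_axis t : t * rslope (t ^ 2 + 0 ^ 2) = F t.
Proof.
  destruct (Req_dec t 0) as [-> | Ht].
  - rewrite F_0. ring.
  - rewrite rslope_pos by nra. rewrite sqrt_sq_abs.
    destruct (Rle_lt_dec 0 t).
    + rewrite Rabs_pos_eq by lra. field. exact Ht.
    + rewrite Rabs_left, F_odd by lra. field. exact Ht.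
Qed.

Lemma is_derive_rslope u : 0 < u -> is_derive rslope u (rcurv u / 2).
Proof.
  intros Hu.
  apply (is_derive_ext_loc (fun v => F (sqrt v) / sqrt v)).
  { generalize (locally_gt u Hu). apply filter_imp. intros v Hv. now rewrite rslope_pos. }
  assert (Hs : is_derive sqrt u (1 / (2 * sqrt u))).
  { apply (is_derive_sqrt (fun t => t) u 1); [apply (is_derive_id (K := R_AbsRing)) | exact Hu]. }
  assert (Hsu : 0 < sqrt u) by (apply sqrt_lt_R0; exact Hu).
  eapply is_derive_value.
  - apply is_derive_div; [| exact Hs | lra].
    apply (is_derive_comp F sqrt); [apply F_deriv | exact Hs].
  - unfold rcurv. rewrite rslope_pos by exact Hu.
    assert (Hu2 : u = sqrt u * sqrt u) by (rewrite sqrt_sqrt; lra).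
    set (s := sqrt u) in *. rewrite Hu2.
    unfold scal; simpl; unfold mult; simpl. field. lra.
Qed.

Lemma is_derive_sq_plus a b : is_derive (fun t => t ^ 2 + b ^ 2) a (2 * a).
Proof. auto_derive; [exact I | ring]. Qed.

Lemma is_derive_G_x x y : is_derive (fun t => G t y) x (x * rslope (x ^ 2 + y ^ 2)).
Proof.
  destruct (Rlt_dec 0 (x ^ 2 + y ^ 2)) as [Hq | Hq].
  - apply (is_derive_ext (fun t => g (sqrt (t ^ 2 + y ^ 2)))); [intros; symmetry; apply G_radial |].
    eapply is_derive_value.
    + apply (is_derive_comp g); [apply g_deriv |].
      apply is_derive_sqrt; [apply is_derive_sq_plus | exact Hq].
    + rewrite rslope_pos by exact Hq.
      assert (0 < sqrt (x ^ 2 + y ^ 2)) by (apply sqrt_lt_R0; exact Hq).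
      set (s := sqrt (x ^ 2 + y ^ 2)) in *.
      unfold scal; simpl; unfold mult; simpl. field. lra.
  - destruct (sum_sq_le_0 x y ltac:(lra)) as [-> ->].
    apply (is_derive_ext g); [intros; symmetry; apply G_axis |].
    eapply is_derive_value; [apply g_deriv | rewrite F_0; simpl; ring].
Qed.

Lemma d1_radial x y : d1 G x y = x * rslope (x ^ 2 + y ^ 2).
Proof. apply is_derive_unique, is_derive_G_x. Qed.

Lemma d2_radial x y : d2 G x y = y * rslope (x ^ 2 + y ^ 2).
Proof.
  unfold d2. rewrite (Derive_ext _ (fun t => G t x)) by (intros; apply G_sym).
  apply is_derive_unique. eapply is_derive_value; [apply is_derive_G_x | do 2 f_equal; ring].
Qed.

Lemma is_derive_mul_rslope a b :
  is_derive (fun t => t * rslope (t ^ 2 + b ^ 2)) a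
    (rslope (a ^ 2 + b ^ 2) + a ^ 2 * rcurv (a ^ 2 + b ^ 2)).
Proof.
  destruct (Rlt_dec 0 (a ^ 2 + b ^ 2)) as [Hq | Hq].
  - eapply is_derive_value.
    + apply (is_derive_mult (fun t => t) (fun t => rslope (t ^ 2 + b ^ 2)));
        [apply is_derive_id
        | apply (is_derive_comp rslope); [apply is_derive_rslope, Hq | apply is_derive_sq_plus]
        | intros; apply Rmult_comm].
    + unfold scal, plus, mult, one; simpl. unfold mult, plus; simpl. field.
  - destruct (sum_sq_le_0 a b ltac:(lra)) as [-> ->].
    apply (is_derive_ext F); [intros; symmetry; apply mul_rslope_axis |].
    eapply is_derive_value; [apply F_deriv |].
    replace (0 ^ 2 + 0 ^ 2) with 0 by ring. rewrite rslope_0. ring.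
Qed.

Lemma is_derive_scal_rslope a b c : c = 0 \/ 0 < a ^ 2 + b ^ 2 ->
  is_derive (fun t => c * rslope (t ^ 2 + b ^ 2)) a (c * a * rcurv (a ^ 2 + b ^ 2)).
Proof.
  intros [-> | Hq].
  - apply (is_derive_ext (fun _ => 0)); [intros; simpl; ring |].
    eapply is_derive_value; [apply (is_derive_const (V := R_NormedModule)) |].
    unfold zero; simpl; ring.
  - eapply is_derive_value.
    + apply (is_derive_scal (fun t => rslope (t ^ 2 + b ^ 2))),
        (is_derive_comp rslope); [apply is_derive_rslope, Hq | apply is_derive_sq_plus].
    + unfold scal; simpl; unfold mult; simpl. field.
Qed.

Lemma H11_radial x y : H11 G x y = rslope (x ^ 2 + y ^ 2) + x ^ 2 * rcurv (x ^ 2 + y ^ 2).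
Proof.
  unfold H11, d1 at 1. rewrite (Derive_ext _ _ _ (fun t => d1_radial t y)).
  apply is_derive_unique, is_derive_mul_rslope.
Qed.

Lemma H22_radial x y : H22 G x y = rslope (x ^ 2 + y ^ 2) + y ^ 2 * rcurv (x ^ 2 + y ^ 2).
Proof.
  unfold H22, d2 at 1.
  rewrite (Derive_ext _ (fun t => t * rslope (t ^ 2 + x ^ 2)))
    by (intros; rewrite d2_radial; do 2 f_equal; ring).
  apply is_derive_unique. eapply is_derive_value; [apply is_derive_mul_rslope |].
  replace (y ^ 2 + x ^ 2) with (x ^ 2 + y ^ 2) by ring. reflexivity.
Qed.

Lemma H12_radial x y : H12 G x y = x * y * rcurv (x ^ 2 + y ^ 2).
Proof.
  unfold H12, d2 at 1.
  rewrite (Derive_ext _ (fun t => x * rslope (t ^ 2 + x ^ 2)))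
    by (intros; rewrite d1_radial; do 2 f_equal; ring).
  apply is_derive_unique. eapply is_derive_value.
  - apply is_derive_scal_rslope.
    destruct (Rlt_dec 0 (y ^ 2 + x ^ 2)); [now right | left; apply (sum_sq_le_0 y x); lra].
  - replace (y ^ 2 + x ^ 2) with (x ^ 2 + y ^ 2) by ring. ring.
Qed.

Lemma H21_radial x y : H21 G x y = x * y * rcurv (x ^ 2 + y ^ 2).
Proof.
  unfold H21, d1 at 1.
  rewrite (Derive_ext _ (fun t => y * rslope (t ^ 2 + y ^ 2))) by (intros; apply d2_radial).
  apply is_derive_unique. eapply is_derive_value.
  - apply is_derive_scal_rslope.
    destruct (Rlt_dec 0 (x ^ 2 + y ^ 2)); [now right | left; apply (sum_sq_le_0 x y); lra].
  - ring.
Qed.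

Lemma D2form_radial x y a b : D2form G x y a b =
  rslope (x ^ 2 + y ^ 2) * (a ^ 2 + b ^ 2) + rcurv (x ^ 2 + y ^ 2) * (x * a + y * b) ^ 2.
Proof. unfold D2form. rewrite H11_radial, H12_radial, H21_radial, H22_radial. ring. Qed.

Lemma D2form_radial_between x y a b L U :
  (0 < norm2 x y -> L <= F (norm2 x y) / norm2 x y <= U) ->
  L <= f (norm2 x y) <= U ->
  L * norm2 a b ^ 2 <= D2form G x y a b <= U * norm2 a b ^ 2.
Proof.
  intros Hslope Hf. rewrite D2form_radial. unfold norm2 in *.
  rewrite pow2_sqrt by nra.
  destruct (Rlt_dec 0 (x ^ 2 + y ^ 2)) as [Hq | Hq].
  - rewrite rslope_pos by exact Hq.
    assert (Hr : 0 < sqrt (x ^ 2 + y ^ 2)) by (apply sqrt_lt_R0; exact Hq).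
    specialize (Hslope Hr).
    assert (Hcs : (x * a + y * b) ^ 2 <= (x ^ 2 + y ^ 2) * (a ^ 2 + b ^ 2))
      by (assert (0 <= (x * b - y * a) ^ 2) by apply pow2_ge_0; nra).
    unfold rcurv. rewrite rslope_pos by exact Hq.
    (* t is the weight of the eigenvalue f r in the convex combination *)
    set (t := (x * a + y * b) ^ 2 / (x ^ 2 + y ^ 2)).
    assert (Ht : 0 <= t <= a ^ 2 + b ^ 2).
    { unfold t. split; [apply Rdiv_le_0_compat; [apply pow2_ge_0 | exact Hq] |].
      apply Rmult_le_reg_r with (x ^ 2 + y ^ 2); [exact Hq |].
      unfold Rdiv. rewrite Rmult_assoc, Rinv_l by lra. lra. }
    set (r := sqrt (x ^ 2 + y ^ 2)) in *.
    replace (F r / r * (a ^ 2 + b ^ 2)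
             + (f r - F r / r) / (x ^ 2 + y ^ 2) * (x * a + y * b) ^ 2)
      with (F r / r * (a ^ 2 + b ^ 2 - t) + f r * t) by (unfold t; field; lra).
    split; nra.
  - destruct (sum_sq_le_0 x y ltac:(lra)) as [-> ->].
    replace (0 ^ 2 + 0 ^ 2) with 0 in * by ring. rewrite sqrt_0 in Hf.
    rewrite rslope_0. split; nra.
Qed.

Lemma D2norm_radial x y : 0 < x ^ 2 + y ^ 2 ->
  D2norm G x y = sqrt (rslope (x ^ 2 + y ^ 2) ^ 2 + f (sqrt (x ^ 2 + y ^ 2)) ^ 2).
Proof.
  intros Hq. unfold D2norm. rewrite H11_radial, H12_radial, H21_radial, H22_radial.
  f_equal. unfold rcurv. field. lra.
Qed.

Lemma D2norm_radial_le x y : 0 <= F (norm2 x y) -> 0 <= f (norm2 x y) ->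
  D2norm G x y * norm2 x y ^ 2 <= norm2 x y * F (norm2 x y) + norm2 x y ^ 2 * f (norm2 x y).
Proof.
  intros HF Hf. unfold norm2 in *.
  destruct (Rlt_dec 0 (x ^ 2 + y ^ 2)) as [Hq | Hq].
  - rewrite D2norm_radial, rslope_pos by exact Hq.
    assert (Hr : 0 < sqrt (x ^ 2 + y ^ 2)) by (apply sqrt_lt_R0; exact Hq).
    set (r := sqrt (x ^ 2 + y ^ 2)) in *.
    assert (Hslope : 0 <= F r / r) by (apply Rdiv_le_0_compat; lra).
    assert (Hsqrt : sqrt ((F r / r) ^ 2 + f r ^ 2) <= F r / r + f r).
    { rewrite <- (sqrt_pow2 (F r / r + f r)) by lra. apply sqrt_le_1_alt. nra. }
    replace (r * F r + r ^ 2 * f r) with ((F r / r + f r) * r ^ 2) by (field; lra).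
    apply Rmult_le_compat_r; [nra | exact Hsqrt].
  - destruct (sum_sq_le_0 x y ltac:(lra)) as [-> ->].
    replace (0 ^ 2 + 0 ^ 2) with 0 in * by ring. rewrite sqrt_0 in *. nra.
Qed.

End RadialHessian.

(* Extended evenly to r < 0, so that its primitives give a radial profile that is C^2 on the
   whole line. *)
Definition kern (eps : R) (rho : R -> R) (r : R) : R :=
  Rpower (eps + Rabs r) (rho (Rabs r) - 2).
Definition kern_prim (eps : R) (rho : R -> R) (s : R) : R := RInt (kern eps rho) 0 s.
Definition kern_prim2 (eps : R) (rho : R -> R) (t : R) : R := RInt (kern_prim eps rho) 0 t.

Lemma kern_gt_0 eps rho r : 0 < kern eps rho r.
Proof. apply Rpower_gt_0. Qed.

Lemma kern_even eps rho r : kern eps rho (- r) = kern eps rho r.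
Proof. unfold kern. now rewrite Rabs_Ropp. Qed.

Section Kernel.

Variables (p mu eps : R) (rho : R -> R).
Hypothesis hp : 1 < p.
Hypothesis hmu : 1 < mu.
Hypothesis heps : 0 < eps.
Hypothesis hcont : forall r, 0 <= r ->
  filterlim rho (within (fun t => 0 <= t) (locally r)) (locally (rho r)).
Hypothesis hrange : forall r, 0 <= r -> 2 - mu <= rho r <= p.

Lemma continuous_rho_abs z : continuous (fun t => rho (Rabs t)) z.
Proof.
  eapply filterlim_comp; [| apply hcont, Rabs_pos].
  intros P HP. generalize (continuous_Rabs z _ HP). unfold filtermap. apply filter_imp.
  intros t Ht. apply Ht, Rabs_pos.
Qed.

Lemma continuous_kern z : continuous (kern eps rho) z.
Proof.
  apply continuous_exp_comp.
  apply (continuous_mult (fun t => rho (Rabs t) - 2) (fun t => ln (eps + Rabs t))).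
  - apply (continuous_plus (fun t => rho (Rabs t)) (fun _ => -2));
      [apply continuous_rho_abs | apply continuous_const].
  - apply (continuous_comp (fun t => eps + Rabs t) ln).
    + apply (continuous_plus (fun _ => eps) Rabs); [apply continuous_const | apply continuous_Rabs].
    + apply continuous_ln. generalize (Rabs_pos z). simpl. lra.
Qed.

Lemma is_derive_kern_prim s : is_derive (kern_prim eps rho) s (kern eps rho s).
Proof. apply is_derive_RInt_0, continuous_kern. Qed.

Lemma continuous_kern_prim s : continuous (kern_prim eps rho) s.
Proof. apply continuous_RInt_0_of_cont, continuous_kern. Qed.

Lemma is_derive_kern_prim2 t : is_derive (kern_prim2 eps rho) t (kern_prim eps rho t).
Proof. apply is_derive_RInt_0, continuous_kern_prim. Qed.

Lemma kern_prim_odd s : kern_prim eps rho (- s) = - kern_prim eps rho s.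
Proof. apply RInt_0_opp_even; [apply continuous_kern | apply kern_even]. Qed.

Lemma kern_prim2_even t : kern_prim2 eps rho (- t) = kern_prim2 eps rho t.
Proof. apply RInt_0_opp_odd; [apply continuous_kern_prim | apply kern_prim_odd]. Qed.

Lemma Gfun_radial x y : Gfun eps rho x y = kern_prim2 eps rho (norm2 x y).
Proof.
  apply RInt_ext. intros s Hs. rewrite Rmin_left in Hs by apply sqrt_pos.
  apply RInt_ext. intros r Hr. rewrite Rmin_left in Hr by lra.
  unfold kern. now rewrite Rabs_pos_eq by lra.
Qed.

Lemma kern_prim_Chasles u v :
  kern_prim eps rho v = kern_prim eps rho u + RInt (kern eps rho) u v.
Proof.
  symmetry. apply (RInt_Chasles (V := R_CompleteNormedModule));
    apply ex_RInt_of_cont, continuous_kern.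
Qed.

Lemma RInt_kern_ge_0 u v : u <= v -> 0 <= RInt (kern eps rho) u v.
Proof.
  intros Huv. apply RInt_ge_0; [exact Huv | apply ex_RInt_of_cont, continuous_kern |].
  intros; left; apply kern_gt_0.
Qed.

Lemma kern_prim_le u v : 0 <= u -> u <= v -> kern_prim eps rho u <= kern_prim eps rho v.
Proof.
  intros Hu Huv. rewrite (kern_prim_Chasles u v). generalize (RInt_kern_ge_0 u v Huv). lra.
Qed.

Lemma kern_prim_ge_0 s : 0 <= s -> 0 <= kern_prim eps rho s.
Proof. intros Hs. unfold kern_prim. apply RInt_kern_ge_0, Hs. Qed.

Definition kern_const : R := exp ((mu + Rabs (p - 2)) * Rabs (ln eps)).

Lemma kern_const_gt_0 : 0 < kern_const.
Proof. apply exp_pos. Qed.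

Lemma kern_shift_bounds r lo hi : 0 <= r -> lo <= rho r - 2 <= hi ->
  / kern_const * Rpower (1 + r) lo <= kern eps rho r <= kern_const * Rpower (1 + r) hi.
Proof.
  intros Hr He. unfold kern. rewrite Rabs_pos_eq by exact Hr.
  apply Rpower_shift_bounds; [exact heps | exact Hr | exact He |].
  apply Rabs_le_between. generalize (hrange r Hr) (Rle_abs (p - 2)) (Rabs_pos (p - 2)). lra.
Qed.

Lemma kern_bounds r : 0 <= r ->
  / kern_const * Rpower (1 + r) (- mu) <= kern eps rho r
    <= kern_const * Rpower (1 + r) (p - 2).
Proof. intros Hr. apply kern_shift_bounds; [exact Hr | generalize (hrange r Hr); lra]. Qed.

Lemma kern_prim_lower s : 0 <= s ->
  s * (/ kern_const * Rpower (1 + s) (- mu)) <= kern_prim eps rho s.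
Proof.
  intros Hs. unfold kern_prim.
  rewrite <- (Rminus_0_r s) at 1. rewrite <- (RInt_const (V := R_CompleteNormedModule)).
  apply RInt_le; [exact Hs | apply (ex_RInt_const (V := R_NormedModule))
                 | apply ex_RInt_of_cont, continuous_kern |].
  intros x Hx. eapply Rle_trans; [| apply kern_bounds; lra].
  apply Rmult_le_compat_l; [left; apply Rinv_0_lt_compat, kern_const_gt_0 |].
  rewrite !Rpower_Ropp. apply Rinv_le_contravar; [apply Rpower_gt_0 |].
  apply Rle_Rpower_l; lra.
Qed.

Lemma kern_prim_upper s : 0 <= s ->
  kern_prim eps rho s <= kern_const * (1 + / (p - 1)) * (s * Rpower (1 + s) (p - 2)).
Proof.
  intros Hs. unfold kern_prim.
  apply Rle_trans with (RInt (fun x => kern_const * Rpower (1 + x) (p - 2)) 0 s).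
  - apply RInt_le; [exact Hs | apply ex_RInt_of_cont, continuous_kern
                   | apply (ex_RInt_scal (V := R_CompleteNormedModule)), ex_RInt_Rpower_1p; lra |].
    intros x Hx. apply kern_bounds. lra.
  - rewrite (RInt_scal (V := R_CompleteNormedModule)) by (apply ex_RInt_Rpower_1p; lra).
    rewrite Rmult_assoc. apply Rmult_le_compat_l; [left; apply kern_const_gt_0 |].
    replace (p - 1) with (p - 2 + 1) by ring. apply RInt_Rpower_1p_le; lra.
Qed.

Lemma Gfun_D2form_bounds x y a b :
  / kern_const * Rpower (1 + norm2 x y) (- mu) * norm2 a b ^ 2 <= D2form (Gfun eps rho) x y a b
  <= kern_const * (1 + / (p - 1)) * Rpower (1 + norm2 x y) (p - 2) * norm2 a b ^ 2.
Proof.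
  assert (Hn := sqrt_pos (x ^ 2 + y ^ 2)). fold (norm2 x y) in Hn.
  apply (D2form_radial_between _ (kern_prim2 eps rho) (kern_prim eps rho) (kern eps rho));
    auto using Gfun_radial, is_derive_kern_prim2, is_derive_kern_prim,
               kern_prim2_even, kern_prim_odd.
  - intros Hr. set (r := norm2 x y) in *.
    generalize (kern_prim_lower r Hn) (kern_prim_upper r Hn). intros Hlo Hup.
    split; [apply (proj1 (Rle_div_r _ _ r Hr)) | apply (proj2 (Rle_div_l _ _ r Hr))]; lra.
  - generalize (kern_bounds _ Hn). intros [Hlo Hup]. split; [exact Hlo |].
    eapply Rle_trans; [exact Hup |]. rewrite !Rmult_assoc.
    apply Rmult_le_compat_l; [left; apply kern_const_gt_0 |].
    assert (0 < / (p - 1)) by (apply Rinv_0_lt_compat; lra).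
    generalize (Rpower_gt_0 (1 + norm2 x y) (p - 2)). nra.
Qed.

Lemma kern_prim2_lower r : 0 <= r ->
  0 <= kern_prim2 eps rho r /\ (r - 1) * kern_prim eps rho 1 <= kern_prim2 eps rho r.
Proof.
  intros Hr. unfold kern_prim2.
  assert (Hex : forall u v, ex_RInt (kern_prim eps rho) u v)
    by (intros; apply ex_RInt_of_cont, continuous_kern_prim).
  assert (Hpos : forall u v, 0 <= u <= v -> 0 <= RInt (kern_prim eps rho) u v).
  { intros u v Huv. apply RInt_ge_0; [lra | apply Hex |].
    intros; apply kern_prim_ge_0; lra. }
  split; [apply Hpos; lra |].
  destruct (Rle_lt_dec 1 r) as [H1 | H1].
  - rewrite <- (RInt_Chasles (V := R_CompleteNormedModule) _ 0 1 r) by apply Hex.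
    assert (0 <= RInt (kern_prim eps rho) 0 1) by (apply Hpos; lra).
    assert ((r - 1) * kern_prim eps rho 1 <= RInt (kern_prim eps rho) 1 r).
    { rewrite <- (RInt_const (V := R_CompleteNormedModule)).
      apply RInt_le; [exact H1 | apply (ex_RInt_const (V := R_NormedModule)) | apply Hex |].
      intros; apply kern_prim_le; lra. }
    unfold plus; simpl. lra.
  - assert (0 <= kern_prim eps rho 1) by (apply kern_prim_ge_0; lra).
    assert (0 <= RInt (kern_prim eps rho) 0 r) by (apply Hpos; lra).
    nra.
Qed.

Lemma kern_prim2_linear_lower :
  exists k, 0 <= k /\ forall r, 0 <= r -> 1 + r <= k * (kern_prim2 eps rho r + 1).
Proof.
  set (m := kern_prim eps rho 1).
  assert (Hm : 0 < m).
  { apply RInt_gt_0; [lra | intros; apply kern_gt_0 | intros; apply continuous_kern]. }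
  assert (Hk : 0 < 2 / m) by (apply Rdiv_lt_0_compat; lra).
  exists (3 + 2 / m). split; [lra |].
  intros r Hr. destruct (kern_prim2_lower r Hr) as [Hg0 Hg].
  fold m in Hg. set (gr := kern_prim2 eps rho r) in *.
  assert (2 / m * m = 2) by (field; lra).
  destruct (Rle_lt_dec r 2); nra.
Qed.

Section Tail.

Variables (a R1 : R).
Hypothesis ha : 1 < a.
Hypothesis hR1 : 0 <= R1.
Hypothesis htail : forall r, R1 <= r -> rho r - 2 <= - a.

Lemma kern_tail r : R1 <= r -> kern eps rho r <= kern_const * Rpower (1 + r) (- a).
Proof.
  intros Hr. apply (kern_shift_bounds r (- mu)); [lra |].
  split; [generalize (hrange r ltac:(lra)); lra | apply htail, Hr].
Qed.

Lemma kern_prim_bounded r : 0 <= r ->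
  kern_prim eps rho r <= kern_prim eps rho R1 + kern_const / (a - 1).
Proof.
  intros Hr.
  assert (0 <= kern_const / (a - 1))
    by (apply Rdiv_le_0_compat; [left; apply kern_const_gt_0 | lra]).
  destruct (Rle_lt_dec r R1) as [Hle | Hlt].
  - generalize (kern_prim_le r R1 Hr Hle). lra.
  - rewrite (kern_prim_Chasles R1 r). apply Rplus_le_compat_l.
    apply Rle_trans with (RInt (fun x => kern_const * Rpower (1 + x) (- a)) R1 r).
    + apply RInt_le; [lra | apply ex_RInt_of_cont, continuous_kern
                     | apply (ex_RInt_scal (V := R_CompleteNormedModule)), ex_RInt_Rpower_1p;
                       lra |].
      intros x Hx. apply kern_tail. lra.
    + rewrite (RInt_scal (V := R_CompleteNormedModule)) by (apply ex_RInt_Rpower_1p; lra).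
      apply Rmult_le_compat_l; [left; apply kern_const_gt_0 |].
      apply RInt_Rpower_1p_tail; lra.
Qed.

Lemma sq_kern_linear :
  exists B, 0 <= B /\ forall r, 0 <= r -> r ^ 2 * kern eps rho r <= B * (1 + r).
Proof.
  set (C := R1 ^ 2 * (kern_const * Rpower (1 + R1) (Rabs (p - 2)))).
  assert (HC : 0 <= C).
  { apply Rmult_le_pos; [nra |].
    generalize kern_const_gt_0 (Rpower_gt_0 (1 + R1) (Rabs (p - 2))). nra. }
  assert (Hk := kern_const_gt_0).
  exists (kern_const + C). split; [lra |].
  intros r Hr. assert (Hkr := kern_gt_0 eps rho r).
  destruct (Rle_lt_dec R1 r) as [Hge | Hlt].
  - assert (Hpow : (1 + r) * Rpower (1 + r) (- a) = Rpower (1 + r) (1 - a)).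
    { replace (1 - a) with (- a + 1) by ring. rewrite Rpower_plus, Rpower_1 by lra. ring. }
    assert (Rpower (1 + r) (1 - a) <= 1) by (apply Rpower_1p_le_1; lra).
    assert (r ^ 2 * kern eps rho r <= (1 + r) ^ 2 * (kern_const * Rpower (1 + r) (- a))).
    { apply Rmult_le_compat; [nra | lra | nra | apply kern_tail, Hge]. }
    assert (E : (1 + r) ^ 2 * (kern_const * Rpower (1 + r) (- a))
                = kern_const * (1 + r) * Rpower (1 + r) (1 - a)) by (rewrite <- Hpow; ring).
    assert (kern_const * (1 + r) * Rpower (1 + r) (1 - a) <= kern_const * (1 + r)).
    { rewrite <- (Rmult_1_r (kern_const * (1 + r))) at 2. apply Rmult_le_compat_l; nra. }
    assert (0 <= C * (1 + r)) by (apply Rmult_le_pos; lra).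
    lra.
  - assert (Rpower (1 + r) (p - 2) <= Rpower (1 + R1) (Rabs (p - 2))).
    { apply Rle_trans with (Rpower (1 + r) (Rabs (p - 2))).
      - apply Rle_Rpower; [lra | apply Rle_abs].
      - apply Rle_Rpower_l; [apply Rabs_pos | lra]. }
    assert (kern eps rho r <= kern_const * Rpower (1 + R1) (Rabs (p - 2))).
    { eapply Rle_trans; [apply kern_bounds, Hr |]. apply Rmult_le_compat_l; lra. }
    assert (r ^ 2 * kern eps rho r <= C) by (apply Rmult_le_compat; nra).
    nra.
Qed.

Lemma Gfun_D2norm_growth : exists c, forall x y,
  D2norm (Gfun eps rho) x y * norm2 x y ^ 2 <= c * (Gfun eps rho x y + 1).
Proof.
  destruct sq_kern_linear as [B [HB HBr]].
  destruct kern_prim2_linear_lower as [k [Hk Hkr]].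
  set (Fmax := kern_prim eps rho R1 + kern_const / (a - 1)).
  assert (HFmax : 0 <= Fmax).
  { assert (0 <= kern_const / (a - 1))
      by (apply Rdiv_le_0_compat; [left; apply kern_const_gt_0 | lra]).
    generalize (kern_prim_ge_0 R1 hR1). unfold Fmax. lra. }
  set (A := Fmax + B).
  exists (A * k). intros x y.
  assert (Hr := sqrt_pos (x ^ 2 + y ^ 2)). fold (norm2 x y) in Hr.
  rewrite Gfun_radial. set (r := norm2 x y) in *.
  assert (HD := D2norm_radial_le (Gfun eps rho) (kern_prim2 eps rho) (kern_prim eps rho)
                  (kern eps rho) Gfun_radial is_derive_kern_prim2 is_derive_kern_prim
                  kern_prim2_even kern_prim_odd x y
                  (kern_prim_ge_0 _ Hr) (Rlt_le _ _ (kern_gt_0 _ _ _))).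
  fold r in HD.
  assert (r * kern_prim eps rho r <= Fmax * r)
    by (rewrite Rmult_comm; apply Rmult_le_compat_r; [exact Hr | apply kern_prim_bounded, Hr]).
  assert (D2norm (Gfun eps rho) x y * r ^ 2 <= A * (1 + r))
    by (generalize (HBr r Hr); unfold A; lra).
  assert (A * (1 + r) <= A * (k * (kern_prim2 eps rho r + 1)))
    by (apply Rmult_le_compat_l; [unfold A; lra | apply Hkr, Hr]).
  lra.
Qed.

End Tail.

End Kernel.

Theorem proposition5p5 (p mu eps : R) (rho : R -> R)
  (hp : 1 < p) (hmu : 1 < mu) (heps : 0 < eps)
  (hcont : forall r, 0 <= r ->
     filterlim rho (within (fun t => 0 <= t) (locally r)) (locally (rho r)))
  (hdec : forall r s, 0 <= r -> r <= s -> rho s <= rho r)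
  (hrange : forall r, 0 <= r -> 2 - mu <= rho r <= p)
  (h0 : rho 0 = p)
  (hlim : is_lim rho p_infty (2 - mu)) :
  (exists c5 c6 : R, 0 < c5 /\ 0 < c6 /\
     forall x y a b : R,
       c5 * Rpower (1 + norm2 x y) (- mu) * (norm2 a b) ^ 2
         <= D2form (Gfun eps rho) x y a b /\
       D2form (Gfun eps rho) x y a b
         <= c6 * Rpower (1 + norm2 x y) (p - 2) * (norm2 a b) ^ 2) /\
  (exists c49 : R, forall x y : R,
     D2norm (Gfun eps rho) x y * (norm2 x y) ^ 2 <= c49 * (Gfun eps rho x y + 1)).
Proof.
  split.
  - assert (Hk := kern_const_gt_0 p mu eps).
    exists (/ kern_const p mu eps), (kern_const p mu eps * (1 + / (p - 1))).
    split; [apply Rinv_0_lt_compat, Hk |].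
    split; [assert (0 < / (p - 1)) by (apply Rinv_0_lt_compat; lra); nra |].
    intros x y a b. apply Gfun_D2form_bounds; assumption.
  - assert (Hlt : 2 - mu < 2 - (mu + 1) / 2) by lra.
    destruct (is_lim_p_infty_eventually_le rho _ _ hlim Hlt) as [R1 [HR1 Htail]].
    apply (Gfun_D2norm_growth p mu eps rho hmu heps hcont hrange ((mu + 1) / 2) R1);
      [lra | exact HR1 |].
    intros r Hr. generalize (Htail r Hr). lra.
Qed.
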